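(* Fix $F$ and $c$. For $h_1\in(0,1)$ let $\underline h_2(h_1)\in(0,1)$ be defined by $F(h_1,1)=F(1,\underline h_2(h_1))$, and consider $\boldsymbol h=(h_1,h_2)$ with $h_1\in(0,1)$ and $h_2\in[\underline h_2(h_1),1)$ (equivalently, humans are stronger in dimension 2 than in dimension 1: $F(1,h_2)\ge F(h_1,1)$). For such $\boldsymbol h$ let $w^*_{\boldsymbol h}(\boldsymbol m)=\max\{\bar w_s,\bar w_b,\bar w_t\}$ denote labor income as a function of $\boldsymbol m\in[0,1]^2$. Then there exists $\bar h_1\in(0,1)$ such that: - If $h_1\ge\bar h_1$, then for every $h_2\in[\underline h_2(h_1),1)$, $\boldsymbol m=(1,0)$ maximizes $w^*_{\boldsymbol h}$ over $[0,1]^2$. - If $h_1<\bar h_1$, then there exists $\bar h_2(h_1)\in[\underline h_2(h_1),1)$ such that: if $h_2\in[\bar h_2(h_1),1)$ then $\boldsymbol m=(1,0)$ maximizes $w^*_{\boldsymbol h}$ over $[0,1]^2$; and if $h_2\in[\underline h_2(h_1),\bar h_2(h_1))$ then $\boldsymbol m=(1,1)$ maximizes $w^*_{\boldsymbol h}$ over $[0,1]^2$.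
   Context: $F$ is a cumulative distribution function on $[0,1]^2$ with a density $f$ that has full support on $[0,1]^2$, and $c\in(0,1)$. For $\boldsymbol x,\boldsymbol y\in[0,1]^2$ write $\boldsymbol x\vee\boldsymbol y=(\max\{x_1,y_1\},\max\{x_2,y_2\})$, and for $F(\boldsymbol x)<1$ let $n(\boldsymbol x)=\frac{1}{c(1-F(\boldsymbol x))}$. Given $\boldsymbol h\in(0,1)^2$ and $\boldsymbol m\in[0,1]^2$ define $\bar w_s=F(\boldsymbol h)$, $\bar w_b=n(\boldsymbol m)\big(F(\boldsymbol m\vee\boldsymbol h)-F(\boldsymbol m)\big)$ (with $\bar w_b:=0$ if $F(\boldsymbol m)=1$), $\bar w_t=F(\boldsymbol m\vee\boldsymbol h)-F(\boldsymbol m)/n(\boldsymbol h)$. In the model with abundant machines, $\max\{\bar w_s,\bar w_b,\bar w_t\}$ is the equilibrium wage (labor income) when humans have knowledge $\boldsymbol h$ and machines have knowledge $\boldsymbol m$. *)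

From HB Require Import structures.
From mathcomp Require Import all_boot all_order all_algebra.
From mathcomp Require Import all_classical all_reals all_analysis.
Set Implicit Arguments. Unset Strict Implicit. Unset Printing Implicit Defensive.
Import Order.TTheory GRing.Theory Num.Theory.
Import numFieldNormedType.Exports.
Local Open Scope classical_set_scope.
Local Open Scope ring_scope.

Definition leb2 (R : realType) := ((@lebesgue_measure R) \x (@lebesgue_measure R))%E.

Definition unit_square (R : realType) : set (R * R) := `[0, 1]%classic `*` `[0, 1]%classic.

Definition box (R : realType) (x : R * R) : set (R * R) :=
  `[0, x.1]%classic `*` `[0, x.2]%classic.

Definition cdf_of (R : realType) (f : R * R -> R) (x : R * R) : R :=
  fine (\int[@leb2 R]_(p in box x) (f p)%:E)%E.

Definition full_support_density (R : realType) (f : R * R -> R) : Prop :=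
  [/\ measurable_fun setT f,
      (forall p, 0 <= f p),
      (forall p, @unit_square R p -> 0 < f p),
      (forall p, ~ @unit_square R p -> f p = 0) &
      (\int[@leb2 R]_(p in @unit_square R) (f p)%:E = 1)%E].

Definition vmax (R : realType) (x y : R * R) : R * R :=
  (Num.max x.1 y.1, Num.max x.2 y.2).

Definition nfun (R : realType) (F : R * R -> R) (c : R) (x : R * R) : R :=
  1 / (c * (1 - F x)).

Definition wbar_s (R : realType) (F : R * R -> R) (h : R * R) : R := F h.

Definition wbar_b (R : realType) (F : R * R -> R) (c : R) (h m : R * R) : R :=
  if F m == 1 then 0 else nfun F c m * (F (vmax m h) - F m).

Definition wbar_t (R : realType) (F : R * R -> R) (c : R) (h m : R * R) : R :=
  F (vmax m h) - F m / nfun F c h.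

Definition wstar (R : realType) (F : R * R -> R) (c : R) (h m : R * R) : R :=
  Num.max (wbar_s F h) (Num.max (wbar_b F c h m) (wbar_t F c h m)).

Definition maximizes (R : realType) (F : R * R -> R) (c : R) (h m0 : R * R) : Prop :=
  forall m, @unit_square R m -> wstar F c h m <= wstar F c h m0.

From HB Require Import structures.
From mathcomp Require Import all_boot all_order all_algebra.
From mathcomp Require Import all_classical all_reals all_analysis.
From mathcomp Require Import ring lra measurable_realfun.
Import Order.TTheory GRing.Theory Num.Theory.
Import numFieldNormedType.Exports.
Local Open Scope ring_scope.
Set Implicit Arguments. Unset Strict Implicit. Unset Printing Implicit Defensive.

(* Let F(h1,1) <= F(1,h2). The human-only wage F(h) never exceeds 1 - c(1 - F(h)).
   If m >= h the bottleneck wage vanishes and the task wage is F(m)(1 - c(1 - F(h)));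
   otherwise F(m ∨ h) <= F(1,h2) bounds both remaining wages by F(1,h2)/c.
   These two bounds are attained at m = (1,0) and m = (1,1) respectively, so the
   better of the two candidates is a maximizer. Their difference is continuous and,
   F being supermodular, nondecreasing in h2; it is positive at h2 = 1, which gives
   h2bar(h1) by the intermediate value theorem. If F(h1,1) >= c, i.e. h1 >= h1bar
   with F(h1bar,1) = c, then F(1,h2)/c >= 1 and m = (1,0) always wins. *)

Lemma IVT_open (R : realType) (g : R -> R) (a b v : R) :
  a <= b -> continuous g -> g a < v < g b -> exists2 x, a < x < b & g x = v.
Proof.
move=> ab gc /andP[gav gvb].
have [|x] := @IVT _ g a b v ab (continuous_subspaceT gc).
  by rewrite ge_min le_max (ltW gav) (ltW gvb) orbT.
rewrite in_itv /= => /andP[ax xb] gxv; exists x => //.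
rewrite !lt_neqAle ax xb !andbT; apply/andP; split; apply/eqP => e.
  by move: gav; rewrite e gxv ltxx.
by move: gvb; rewrite -e gxv ltxx.
Qed.

Lemma continuous_nondecreasing_modulus (R : realType) (g : R -> R) :
  {homo g : s t / s <= t} ->
  (forall e, 0 < e -> exists2 d, 0 < d &
     forall s t, s <= t -> t - s < d -> g t - g s < e) ->
  continuous g.
Proof.
move=> g_mono g_mod t; apply/cvgrPdist_lt => e e0.
have [d d0 small] := g_mod e e0.
apply/nbhs_ballP; exists d => // s /= tsd.
have [ts|/ltW st] := leP t s.
  rewrite distrC ger0_norm ?subr_ge0 ?g_mono //; apply: small => //.
  by rewrite (le_lt_trans _ tsd) // distrC ler_norm.
rewrite ger0_norm ?subr_ge0 ?g_mono //; apply: small => //.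
by rewrite (le_lt_trans _ tsd) // ler_norm.
Qed.

Lemma vmax_l (R : realType) (x y : R * R) : y.1 <= x.1 -> y.2 <= x.2 -> vmax x y = x.
Proof. by case: x => ? ? /= h1 h2; rewrite /vmax /= !max_l. Qed.

Section LaborIncome.
Variables (R : realType) (F : R * R -> R) (c : R).
Hypothesis c01 : 0 < c < 1.
Hypothesis F_ge0 : forall x, 0 <= F x.
Hypothesis F_le1 : forall x, F x <= 1.
Hypothesis F_mono : forall x y : R * R, x.1 <= y.1 -> x.2 <= y.2 -> F x <= F y.
Hypotheses (F11 : F (1, 1) = 1) (F10 : F (1, 0) = 0) (F01 : F (0, 1) = 0).
Hypothesis F_supermodular : forall x1 y1 a b : R, x1 <= y1 -> a <= b ->
  F (x1, b) - F (x1, a) <= F (y1, b) - F (y1, a).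
Hypothesis marg1_lt : forall s t, 0 <= s -> s < t -> t <= 1 -> F (s, 1) < F (t, 1).
Hypothesis marg2_lt : forall s t, 0 <= s -> s < t -> t <= 1 -> F (1, s) < F (1, t).
Hypothesis marg1_cont : continuous (fun t => F (t, 1)).
Hypothesis section2_cont : forall x, 0 <= x <= 1 -> continuous (fun t => F (x, t)).

Let c_gt0 : 0 < c. Proof. by case/andP: c01. Qed.
Let c_lt1 : c < 1. Proof. by case/andP: c01. Qed.
Let unit_i : 0 <= (1 : R) <= 1. Proof. by rewrite ler01 lexx. Qed.

Lemma wbar_s_le h : wbar_s F h <= 1 - c * (1 - F h).
Proof. by rewrite /wbar_s; have := F_le1 h; have := c_lt1; nra. Qed.

Lemma wbar_b_le h m : wbar_b F c h m <= F (vmax m h) / c.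
Proof.
have := F_ge0 m; have := F_le1 (vmax m h); have := F_ge0 (vmax m h).
rewrite /wbar_b; case: eqP => [_|/eqP Fm_neq1] Fv0 Fv1 Fm0.
  by rewrite divr_ge0 // ltW.
have Fm_lt1 : F m < 1 by rewrite lt_neqAle Fm_neq1 F_le1.
rewrite /nfun mul1r ler_pdivrMl ?mulr_gt0 ?subr_gt0 //.
rewrite [_ * (F _ / c)]mulrC mulrA divfK ?gt_eqF //.
nra.
Qed.

Lemma wbar_t_le h m : wbar_t F c h m <= F (vmax m h).
Proof.
rewrite /wbar_t /nfun div1r invrK gerBl mulr_ge0 ?mulr_ge0 ?subr_ge0 //.
exact: ltW.
Qed.

Lemma wbar_b_dominated h m : h.1 <= m.1 -> h.2 <= m.2 -> wbar_b F c h m = 0.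
Proof. by move=> h1m h2m; rewrite /wbar_b vmax_l // subrr mulr0 if_same. Qed.

Lemma wbar_t_dominated h m : h.1 <= m.1 -> h.2 <= m.2 ->
  wbar_t F c h m <= 1 - c * (1 - F h).
Proof.
move=> h1m h2m; rewrite /wbar_t /nfun div1r invrK vmax_l //.
have k_le1 : c * (1 - F h) <= 1.
  by rewrite mulr_ile1 ?subr_ge0 ?F_le1 ?gerBl ?F_ge0 // ltW.
have : 0 <= (1 - F m) * (1 - c * (1 - F h)) by rewrite mulr_ge0 // subr_ge0.
nra.
Qed.

Lemma wbar_b_10 h1 h2 : h1 <= 1 -> 0 <= h2 -> wbar_b F c (h1, h2) (1, 0) = F (1, h2) / c.
Proof.
move=> h11 h20; rewrite /wbar_b /nfun /vmax /= max_l // max_r // F10 eq_sym oner_eq0.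
by rewrite !subr0 mulr1 div1r mulrC.
Qed.

Lemma wbar_t_11 h : h.1 <= 1 -> h.2 <= 1 -> wbar_t F c h (1, 1) = 1 - c * (1 - F h).
Proof. by move=> h11 h21; rewrite /wbar_t vmax_l // F11 /nfun div1r invrK mul1r. Qed.

Lemma F_vmax_le_marg2 h1 h2 a b : h1 <= 1 -> h2 <= 1 -> a <= 1 -> b <= 1 ->
  F (h1, 1) <= F (1, h2) -> ~~ ((h1 <= a) && (h2 <= b)) ->
  F (vmax (a, b) (h1, h2)) <= F (1, h2).
Proof.
move=> h11 h21 a1 b1 stronger2; rewrite negb_and -!ltNge /vmax /=.
case/orP=> [ah1|bh2].
  apply: le_trans stronger2; apply: F_mono; rewrite /= ge_max ?(ltW ah1) ?lexx //.
  by rewrite b1 h21.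
by apply: F_mono; rewrite /= ge_max ?(ltW bh2) ?lexx // a1 h11.
Qed.

Lemma wstar_le h1 h2 m : 0 <= h1 <= 1 -> 0 <= h2 <= 1 -> F (h1, 1) <= F (1, h2) ->
  unit_square m ->
  wstar F c (h1, h2) m <= Num.max (F (1, h2) / c) (1 - c * (1 - F (h1, h2))).
Proof.
move=> /andP[h10 h11] /andP[h20 h21] stronger2.
case: m => a b [/=]; rewrite !in_itv /= => /andP[a0 a1] /andP[b0 b1].
have w10_ge0 : 0 <= F (1, h2) / c by rewrite divr_ge0 // ltW.
rewrite /wstar !ge_max !le_max wbar_s_le orbT /=.
have [/andP[h1a h2b]|undominated] := boolP ((h1 <= a) && (h2 <= b)).
  by rewrite wbar_b_dominated // w10_ge0 wbar_t_dominated // orbT.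
have Fv := F_vmax_le_marg2 h11 h21 a1 b1 stronger2 undominated.
have marg2_le : F (1, h2) <= F (1, h2) / c.
  by rewrite ler_pdivlMr // ler_piMr // ltW.
have wb : wbar_b F c (h1, h2) (a, b) <= F (1, h2) / c.
  by apply: le_trans (wbar_b_le _ _) _; rewrite ler_pM2r // invr_gt0.
have wt : wbar_t F c (h1, h2) (a, b) <= F (1, h2) / c.
  exact: le_trans (wbar_t_le _ _) (le_trans Fv marg2_le).
by rewrite wb wt.
Qed.

Lemma maximizes_10 h1 h2 : 0 <= h1 <= 1 -> 0 <= h2 <= 1 -> F (h1, 1) <= F (1, h2) ->
  1 - c * (1 - F (h1, h2)) <= F (1, h2) / c -> maximizes F c (h1, h2) (1, 0).
Proof.
move=> h1i h2i stronger2 w11_le m /(wstar_le h1i h2i stronger2) /le_trans; apply.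
case/andP: h1i h2i => _ h11 /andP[h20 _].
by rewrite /wstar wbar_b_10 // ge_max !le_max lexx w11_le !orbT.
Qed.

Lemma maximizes_11 h1 h2 : 0 <= h1 <= 1 -> 0 <= h2 <= 1 -> F (h1, 1) <= F (1, h2) ->
  F (1, h2) / c <= 1 - c * (1 - F (h1, h2)) -> maximizes F c (h1, h2) (1, 1).
Proof.
move=> h1i h2i stronger2 w10_le m /(wstar_le h1i h2i stronger2) /le_trans; apply.
case/andP: h1i h2i => _ h11 /andP[_ h21].
by rewrite /wstar wbar_t_11 // ge_max !le_max lexx w10_le !orbT.
Qed.

(* The wage at m = (1, 0) minus the wage at m = (1, 1), see wbar_b_10 and wbar_t_11. *)
Let gap h1 t := F (1, t) / c - (1 - c * (1 - F (h1, t))).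

Lemma gap_nondecreasing h1 : h1 <= 1 -> {homo gap h1 : s t / s <= t}.
Proof.
move=> h11 s t st; rewrite -subr_ge0.
have -> : gap h1 t - gap h1 s =
    (F (1, t) - F (1, s)) / c - c * (F (h1, t) - F (h1, s)) by rewrite /gap; ring.
have dh_ge0 : 0 <= F (h1, t) - F (h1, s) by rewrite subr_ge0 F_mono.
have d1_ge : F (h1, t) - F (h1, s) <= F (1, t) - F (1, s) by exact: F_supermodular.
have : F (1, t) - F (1, s) <= (F (1, t) - F (1, s)) / c.
  by rewrite ler_pdivlMr // ler_piMr ?(le_trans dh_ge0) // ltW.
have : c * (F (h1, t) - F (h1, s)) <= F (h1, t) - F (h1, s).
  by rewrite ler_piMl // ltW.
lra.
Qed.

Lemma gap_continuous h1 : 0 <= h1 <= 1 -> continuous (gap h1).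
Proof.
move=> h1i t; apply: cvgB; first by apply: cvgMr_tmp; exact: section2_cont.
apply: cvgB; first exact: cvg_cst.
by apply: cvgMl_tmp; apply: cvgB; [exact: cvg_cst | exact: section2_cont].
Qed.

Lemma maximizes_10_strong_dim1 h1 h2 : 0 <= h1 <= 1 -> 0 <= h2 <= 1 ->
  c <= F (h1, 1) -> F (h1, 1) <= F (1, h2) -> maximizes F c (h1, h2) (1, 0).
Proof.
move=> h1i h2i cF stronger2; apply: maximizes_10 => //.
have : 1 <= F (1, h2) / c by rewrite ler_pdivlMr // mul1r (le_trans cF).
have : 0 <= c * (1 - F (h1, h2)) by rewrite mulr_ge0 ?subr_ge0 // ltW.
lra.
Qed.

Lemma threshold_dim1 : exists2 hb1, 0 < hb1 < 1 & F (hb1, 1) = c.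
Proof. by apply: IVT_open => //; rewrite ?ler01 // F01 F11. Qed.

Lemma threshold_dim2 h1 : 0 < h1 < 1 ->
  exists hb2 : R, 0 < hb2 < 1 /\ F (h1, 1) <= F (1, hb2) /\
    (forall h2, hb2 <= h2 < 1 -> maximizes F c (h1, h2) (1, 0)) /\
    (forall h2, 0 < h2 < hb2 -> F (h1, 1) <= F (1, h2) ->
       maximizes F c (h1, h2) (1, 1)).
Proof.
move=> /andP[h10 h11]; have h1i : 0 <= h1 <= 1 by rewrite !ltW.
have /andP[Fh1_gt0 Fh1_lt1] : 0 < F (h1, 1) < 1.
  have : F (0, 1) < F (h1, 1) < F (1, 1).
    by rewrite !marg1_lt // ltW.
  by rewrite F01 F11.
have [lo /andP[lo0 lo1] Flo] : exists2 lo, 0 < lo < 1 & F (1, lo) = F (h1, 1).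
  by apply: IVT_open (section2_cont unit_i) _; rewrite ?ler01 // F10 F11 Fh1_gt0.
have stronger2 h2 : lo <= h2 -> F (h1, 1) <= F (1, h2).
  by move=> loh2; rewrite -Flo F_mono.
have max10_above hb2 : lo <= hb2 -> 0 <= gap h1 hb2 ->
    forall h2, hb2 <= h2 < 1 -> maximizes F c (h1, h2) (1, 0).
  move=> lohb gap_hb2 h2 /andP[hb2h2 h21].
  have h2i : 0 <= h2 <= 1 by apply/andP; split; lra.
  apply: maximizes_10; rewrite ?stronger2 ?(le_trans lohb) //.
  by move: gap_hb2 (gap_nondecreasing (ltW h11) hb2h2); rewrite /gap; lra.
have [gap_lo|gap_lo] := leP 0 (gap h1 lo).
  exists lo; rewrite lo0 lo1 -Flo lexx; split=> //; split=> //.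
  split=> [|h2 /andP[h20 h2lo] weaker2]; first exact: max10_above.
  have : F (1, h2) < F (1, lo) by rewrite marg2_lt // ltW.
  lra.
have gap_1 : 0 < gap h1 1.
  have : 1 < 1 / c by rewrite ltr_pdivlMr // mul1r.
  have : 0 < c * (1 - F (h1, 1)) by rewrite mulr_gt0 // subr_gt0.
  rewrite /gap F11; lra.
have [|hb2 /andP[lohb hb21] gap_hb2] := IVT_open (v := 0) (ltW lo1) (gap_continuous h1i).
  by rewrite gap_lo.
exists hb2; split; first by rewrite hb21 (lt_trans lo0).
split; first by rewrite stronger2 // ltW.
split; first by apply: max10_above; rewrite ?gap_hb2 // ltW.
move=> h2 /andP[h20 h2hb2] weaker2.
have h2i : 0 <= h2 <= 1 by apply/andP; split; lra.
apply: maximizes_11 => //.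
by move: gap_hb2 (gap_nondecreasing (ltW h11) (ltW h2hb2)); rewrite /gap; lra.
Qed.

Lemma labor_income_thresholds :
  exists hb1 : R, 0 < hb1 < 1 /\
    (forall h1 h2 : R, hb1 <= h1 < 1 -> 0 < h2 < 1 ->
       F (1, h2) >= F (h1, 1) ->
       maximizes F c (h1, h2) (1, 0)) /\
    (forall h1 : R, 0 < h1 < hb1 ->
       exists hb2 : R, 0 < hb2 < 1 /\ F (1, hb2) >= F (h1, 1) /\
         (forall h2 : R, hb2 <= h2 < 1 ->
            maximizes F c (h1, h2) (1, 0)) /\
         (forall h2 : R, 0 < h2 < hb2 -> F (1, h2) >= F (h1, 1) ->
            maximizes F c (h1, h2) (1, 1))).
Proof.
have [hb1 /andP[hb10 hb11] Fhb1] := threshold_dim1.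
exists hb1; split; first by rewrite hb10.
split=> [h1 h2 /andP[hb1h1 h11] /andP[h20 h21] stronger2|h1 /andP[h10 h1hb1]].
  have h1i : 0 <= h1 <= 1 by apply/andP; split; lra.
  have h2i : 0 <= h2 <= 1 by apply/andP; split; lra.
  by apply: maximizes_10_strong_dim1 => //; rewrite -Fhb1 F_mono.
by apply: threshold_dim2; rewrite h10 (lt_trans h1hb1).
Qed.

End LaborIncome.

Local Open Scope classical_set_scope.

Lemma lebesgue_measure_itv_le (R : realType) (a b : R) (x y : bool) : a <= b ->
  lebesgue_measure [set` Interval (BSide x a) (BSide y b)] = (b - a)%:E.
Proof.
rewrite le_eqVlt => /predU1P[<-|ab]; rewrite lebesgue_measure_itv /=.
  by rewrite ltxx subrr.
by rewrite lte_fin ab -EFinD.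
Qed.

Lemma leb2_itv (R : realType) (a b a' b' : R) (x y x' y' : bool) : a <= b -> a' <= b' ->
  @leb2 R ([set` Interval (BSide x a) (BSide y b)] `*`
           [set` Interval (BSide x' a') (BSide y' b')])
  = ((b - a) * (b' - a'))%:E.
Proof.
move=> ab ab'; rewrite /leb2 product_measure1E // EFinM.
by congr (_ * _)%E; exact: lebesgue_measure_itv_le.
Qed.

Lemma measurable_itvX (R : realType) (i j : interval R) :
  measurable ([set` i] `*` [set` j]).
Proof. by apply: measurableX; exact: measurable_itv. Qed.

Lemma measurable_box (R : realType) (x : R * R) : measurable (box x).
Proof. exact: measurable_itvX. Qed.

Lemma boxP (R : realType) (x p : R * R) :
  box x p <-> (0 <= p.1 <= x.1) /\ (0 <= p.2 <= x.2).
Proof. by rewrite /box /= !in_itv. Qed.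

Lemma subset_box (R : realType) (x y : R * R) :
  x.1 <= y.1 -> x.2 <= y.2 -> box x `<=` box y.
Proof.
move=> x1y1 x2y2 p /boxP[/andP[p10 p1x] /andP[p20 p2x]]; apply/boxP.
by rewrite p10 p20 (le_trans p1x) ?(le_trans p2x).
Qed.

Lemma boxD2_sub (R : realType) (x u v : R) :
  box (x, v) `\` box (x, u) `<=` `[0, x] `*` `]u, v].
Proof.
move=> p [/boxP[p1x /andP[p20 p2v]] pu] /=; rewrite !in_itv /= p1x p2v andbT.
split=> //; rewrite ltNge; apply/negP => p2u.
by apply: pu; apply/boxP; rewrite p1x p20.
Qed.

Lemma boxD1_sub (R : realType) (x u v : R) :
  box (v, x) `\` box (u, x) `<=` `]u, v] `*` `[0, x].
Proof.
move=> p [/boxP[/andP[p10 p1v] p2x] pu] /=; rewrite !in_itv /= p2x p1v andbT.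
split=> //; rewrite ltNge; apply/negP => p1u.
by apply: pu; apply/boxP; rewrite p2x p10.
Qed.

Lemma boxD2_sup (R : realType) (x u v : R) : 0 <= u ->
  `[0, x] `*` `]u, v] `<=` box (x, v) `\` box (x, u).
Proof.
move=> u0 p [/=]; rewrite !in_itv /= => p1x /andP[up2 p2v]; split.
  by apply/boxP; rewrite p1x p2v (le_trans u0) ?ltW.
by case/boxP => _ /andP[_]; rewrite leNgt up2.
Qed.

Lemma boxD1_sup (R : realType) (x u v : R) : 0 <= u ->
  `]u, v] `*` `[0, x] `<=` box (v, x) `\` box (u, x).
Proof.
move=> u0 p [/=]; rewrite !in_itv /= => /andP[up1 p1v] p2x; split.
  by apply/boxP; rewrite p2x p1v (le_trans u0) ?ltW.
by case/boxP => /andP[_]; rewrite leNgt up1.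
Qed.

Section CdfOfDensity.
Variables (R : realType) (f : R * R -> R).
Hypothesis hf : full_support_density f.

Local Notation mass A := (\int[@leb2 R]_(p in A) (f p)%:E)%E.

Let f_ge0 p : 0 <= f p. Proof. by case: hf. Qed.

Let measurable_f (A : set (R * R)) : measurable_fun A (EFin \o f).
Proof. by case: hf => mf _ _ _ _; apply/measurable_EFinP; exact: measurable_funS mf. Qed.

Let mass_abs (A : set (R * R)) : (\int[@leb2 R]_(p in A) `|(f p)%:E| = mass A)%E.
Proof. by apply: eq_integral => p _; rewrite gee0_abs ?lee_fin. Qed.

Lemma mass_ge0 (A : set (R * R)) : (0 <= mass A)%E.
Proof. by apply: integral_ge0 => p _; rewrite lee_fin. Qed.

Lemma le_mass (A B : set (R * R)) : measurable A -> measurable B -> A `<=` B ->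
  (mass A <= mass B)%E.
Proof.
move=> mA mB AB; apply: ge0_subset_integral => //; first exact: measurable_f.
by move=> p _; rewrite lee_fin.
Qed.

Lemma mass_setT : mass setT = 1%E.
Proof.
case: hf => _ _ _ f_out mass_square.
have mS : measurable (@unit_square R) := measurable_box (1, 1).
rewrite -(setUv (@unit_square R)) ge0_integral_setU //.
- by rewrite mass_square integral0_eq ?adde0 // => p /f_out ->.
- exact: measurableC.
- exact: measurable_f.
- by move=> p _; rewrite lee_fin.
- by rewrite /disj_set setICr.
Qed.

Lemma mass_fineK (A : set (R * R)) : measurable A -> (fine (mass A))%:E = mass A.
Proof.
move=> mA; rewrite fineK // ge0_fin_numE ?mass_ge0 //.
by rewrite (le_lt_trans (le_mass mA measurableT (@subsetT _ A))) // mass_setT ltry.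
Qed.

Lemma le_fine_mass (A B : set (R * R)) : measurable A -> measurable B -> A `<=` B ->
  fine (mass A) <= fine (mass B).
Proof. by move=> mA mB AB; rewrite -lee_fin !mass_fineK // le_mass. Qed.

Lemma fine_massD (A B : set (R * R)) : measurable A -> measurable B -> A `<=` B ->
  fine (mass B) - fine (mass A) = fine (mass (B `\` A)).
Proof.
move=> mA mB AB; have mBA : measurable (B `\` A) by exact: measurableD.
apply/EFin_inj; rewrite EFinB !mass_fineK //.
rewrite -{1}(setDUK AB) ge0_integral_setU //.
- by rewrite addeAC subee ?add0e // -(mass_fineK mA).
- exact: measurable_f.
- by move=> p _; rewrite lee_fin.
- by rewrite /disj_set setDE setICA setICr setI0.
Qed.

Lemma mass_gt0 (A : set (R * R)) : measurable A -> A `<=` @unit_square R ->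
  (0 < @leb2 R A)%E -> 0 < fine (mass A).
Proof.
move=> mA A_square A_pos; rewrite -lte_fin mass_fineK // lt_neqAle mass_ge0 andbT.
apply/negP => /eqP mass0.
have := (ae_eq_integral_abs (@leb2 R) mA (@measurable_f A)).1.
rewrite mass_abs -mass0 => /(_ erefl) [N [mN N0 f_neq0_N]].
have AN : A `<=` N.
  move=> p Ap; apply: f_neq0_N => /= /(_ Ap) [fp0]; case: hf => _ _ f_pos _ _.
  by have := f_pos p (A_square p Ap); rewrite fp0 ltxx.
suff : (0 < (0 : \bar R))%E by rewrite ltxx.
rewrite -[X in (_ < X)%E]N0.
exact: lt_le_trans A_pos (le_measure (@leb2 R) (mem_set mA) (mem_set mN) AN).
Qed.

Lemma mass_small e : 0 < e -> exists2 d, 0 < d &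
  forall A : set (R * R), measurable A -> (@leb2 R A < d%:E)%E -> fine (mass A) < e.
Proof.
move=> e0; have f_int : (@leb2 R).-integrable setT (EFin \o f).
  by apply/integrableP; split; [exact: measurable_f | rewrite mass_abs mass_setT ltry].
have [d [d0 small]] := integral_normr_continuous f_int e0.
exists d => // A mA Ad; have := small A mA Ad.
by rewrite /Rintegral; under eq_integral => p _ do rewrite ger0_norm //.
Qed.

Local Notation F := (cdf_of f).

Lemma cdf_ge0 x : 0 <= F x.
Proof. exact/fine_ge0/mass_ge0. Qed.

Lemma cdf_le1 x : F x <= 1.
Proof.
have := le_fine_mass (measurable_box x) measurableT (@subsetT _ _).
by rewrite mass_setT.
Qed.

Lemma cdf_mono x y : x.1 <= y.1 -> x.2 <= y.2 -> F x <= F y.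
Proof.
by move=> x1y1 x2y2; apply: le_fine_mass; try exact: measurable_box; exact: subset_box.
Qed.

Lemma cdfD x y : x.1 <= y.1 -> x.2 <= y.2 -> F y - F x = fine (mass (box y `\` box x)).
Proof.
by move=> x1y1 x2y2; apply: fine_massD; try exact: measurable_box; exact: subset_box.
Qed.

Lemma cdf11 : F (1, 1) = 1.
Proof. by case: hf => _ _ _ _ mass_square; rewrite /cdf_of mass_square. Qed.

Lemma cdf_eq0 x : @leb2 R (box x) = 0%E -> F x = 0.
Proof.
move=> box0; rewrite /cdf_of null_set_integral //; first exact: measurable_box.
exact: measurable_f.
Qed.

Lemma cdf10 : F (1, 0) = 0.
Proof. by apply: cdf_eq0; rewrite leb2_itv ?ler01 // subrr mulr0. Qed.

Lemma cdf01 : F (0, 1) = 0.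
Proof. by apply: cdf_eq0; rewrite leb2_itv ?ler01 // subrr mul0r. Qed.

Lemma cdf_supermodular x1 y1 a b : x1 <= y1 -> a <= b ->
  F (x1, b) - F (x1, a) <= F (y1, b) - F (y1, a).
Proof.
move=> x1y1 ab; rewrite !cdfD //.
apply: le_fine_mass; try by apply: measurableD; exact: measurable_box.
move=> p [/boxP[/andP[p10 p1x] p2b] p_a]; split.
  by apply/boxP; rewrite p2b p10 (le_trans p1x).
by case/boxP => _ p2a; apply: p_a; apply/boxP; rewrite p10 p1x.
Qed.

Lemma cdf_marg2_lt a b : 0 <= a -> a < b -> b <= 1 -> F (1, a) < F (1, b).
Proof.
move=> a0 ab b1; rewrite -subr_gt0 cdfD //= ?ltW //.
have mD : measurable (box (1, b) `\` box (1, a)).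
  by apply: measurableD; exact: measurable_box.
apply: lt_le_trans _ (le_fine_mass (measurable_itvX _ _) mD (@boxD2_sup _ 1 a b a0)).
apply: mass_gt0; first exact: measurable_itvX.
  by move=> p /(boxD2_sup a0) [+ _]; exact: (@subset_box _ (1, b) (1, 1) (lexx _) b1).
by rewrite leb2_itv ?ler01 ?ltW // lte_fin mulr_gt0 ?subr_gt0.
Qed.

Lemma cdf_marg1_lt a b : 0 <= a -> a < b -> b <= 1 -> F (a, 1) < F (b, 1).
Proof.
move=> a0 ab b1; rewrite -subr_gt0 cdfD //= ?ltW //.
have mD : measurable (box (b, 1) `\` box (a, 1)).
  by apply: measurableD; exact: measurable_box.
apply: lt_le_trans _ (le_fine_mass (measurable_itvX _ _) mD (@boxD1_sup _ 1 a b a0)).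
apply: mass_gt0; first exact: measurable_itvX.
  by move=> p /(boxD1_sup a0) [+ _]; exact: (@subset_box _ (b, 1) (1, 1) b1 (lexx _)).
by rewrite leb2_itv ?ler01 ?ltW // lte_fin mulr_gt0 ?subr_gt0.
Qed.

Lemma cdf_section2_cont x : 0 <= x <= 1 -> continuous (fun t => F (x, t)).
Proof.
move=> /andP[x0 x1]; apply: continuous_nondecreasing_modulus => [s t st|e e0].
  exact: cdf_mono.
have [d d0 small] := mass_small e0; exists d => // s t st tsd.
have mD : measurable (box (x, t) `\` box (x, s)).
  by apply: measurableD; exact: measurable_box.
rewrite cdfD //; apply: le_lt_trans (le_fine_mass mD _ (@boxD2_sub _ x s t)) _.
  exact: measurable_itvX.
apply: small; first exact: measurable_itvX.
by rewrite leb2_itv // lte_fin subr0 (le_lt_trans _ tsd) // ler_piMl // subr_ge0.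
Qed.

Lemma cdf_marg1_cont : continuous (fun t => F (t, 1)).
Proof.
apply: continuous_nondecreasing_modulus => [s t st|e e0].
  exact: cdf_mono.
have [d d0 small] := mass_small e0; exists d => // s t st tsd.
have mD : measurable (box (t, 1) `\` box (s, 1)).
  by apply: measurableD; exact: measurable_box.
rewrite cdfD //; apply: le_lt_trans (le_fine_mass mD _ (@boxD1_sub _ 1 s t)) _.
  exact: measurable_itvX.
apply: small; first exact: measurable_itvX.
by rewrite leb2_itv ?ler01 // lte_fin subr0 mulr1.
Qed.

End CdfOfDensity.

Local Close Scope classical_set_scope.

Theorem proposition4 (R : realType) (f : R * R -> R) (c : R) :
  full_support_density f -> 0 < c < 1 ->
  let F := cdf_of f in
  exists hb1 : R, 0 < hb1 < 1 /\
    (forall h1 h2 : R, hb1 <= h1 < 1 -> 0 < h2 < 1 ->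
       F (1, h2) >= F (h1, 1) ->
       maximizes F c (h1, h2) (1, 0)) /\
    (forall h1 : R, 0 < h1 < hb1 ->
       exists hb2 : R, 0 < hb2 < 1 /\ F (1, hb2) >= F (h1, 1) /\
         (forall h2 : R, hb2 <= h2 < 1 ->
            maximizes F c (h1, h2) (1, 0)) /\
         (forall h2 : R, 0 < h2 < hb2 -> F (1, h2) >= F (h1, 1) ->
            maximizes F c (h1, h2) (1, 1))).
Proof.
move=> hf c01 F.
exact: (labor_income_thresholds c01 (cdf_ge0 hf) (cdf_le1 hf) (cdf_mono hf)
  (cdf11 hf) (cdf10 hf) (cdf01 hf) (cdf_supermodular hf) (cdf_marg1_lt hf)
  (cdf_marg2_lt hf) (cdf_marg1_cont hf) (cdf_section2_cont hf)).
Qed.
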